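(* Let $A=(a_1\ a_2\ a_3\ a_4)$ be a matrix of positive integers and $A'=(a_1\ a_2\ a_3)$, where the toric ideal of $A'$ is not a complete intersection and there exists $x\in\mathbb N\{a_1,a_2,a_3\}\cap a_4\mathbb N$ with $x\mathbb Z=\mathbb Z\{a_1,a_2,a_3\}\cap a_4\mathbb Z$. Let $M'=\{g_1'=(-c_1,v_{12},v_{13}),\,g_2'=(v_{21},-c_2,v_{23}),\,g_3'=(v_{31},v_{32},-c_3)\}$ be the minimal Markov basis of $A'$ (all $c_i,v_{ij}$ positive integers), and let $M=\{g_1=(g_1',0),g_2=(g_2',0),g_3=(g_3',0),h=(h_1,h_2,h_3,-h_4)\}$ be a minimal Markov basis of $A$ with $h_1,h_2,h_3\ge0$, $h_4>0$. If $M$ reduces the distance of the circuits of $A$, then $M'$ reduces the distance of the circuits of $A'$.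
   Context: For $z\in\mathbb Z^n$, $z^\pm\in\mathbb N^n$ are the unique vectors with disjoint supports and $z=z^+-z^-$; $\|\cdot\|$ is the $1$-norm. The toric ideal of a matrix $C$ is $I_C=\langle x^{u^+}-x^{u^-}:u\in\ker(C)\rangle$; it is a complete intersection if generated by $\dim\ker(C)$ elements. A Markov basis is a set $B\subseteq\ker(C)$ whose binomials generate $I_C$; minimal means no proper subset is one. For nonzero $z\in\ker(C)$, $u\in\ker(C)$ reduces the distance of $z$ if there exist $(p,q)\in\{(z^+,z^-),(z^-,z^+)\}$ and $\varepsilon\in\{\pm1\}$ with $p+\varepsilon u\in\mathbb N^n$ and $\|p+\varepsilon u-q\|<\|z\|$; $B$ reduces the distance of $Z$ if each nonzero $z\in Z$ has its distance reduced by some element of $B$. A circuit of $C$ is a nonzero element of $\ker(C)$ with support of size exactly two. *)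

From HB Require Import structures.
From mathcomp Require Import all_boot all_order all_algebra.
From mathcomp Require Import mpoly.
Set Implicit Arguments. Unset Strict Implicit. Unset Printing Implicit Defensive.
Import Order.TTheory GRing.Theory Num.Theory.
Local Open Scope ring_scope.

Definition inker (d n : nat) (C : 'M[int]_(d, n)) (z : 'rV[int]_n) : Prop :=
  C *m z^T = 0.

Definition posp (x : int) : nat := match x with Posz k => k | Negz _ => 0%N end.
Definition negp (x : int) : nat := posp (- x).

Definition vpos (n : nat) (z : 'rV[int]_n) : 'rV[int]_n := \row_i ((posp (z 0 i))%:Z).
Definition vneg (n : nat) (z : 'rV[int]_n) : 'rV[int]_n := \row_i ((negp (z 0 i))%:Z).

Definition norm1 (n : nat) (z : 'rV[int]_n) : int := \sum_(i < n) `|z 0 i|.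

Definition mpos (n : nat) (z : 'rV[int]_n) : 'X_{1..n} := [multinom posp (z ord0 i) | i < n].
Definition mneg (n : nat) (z : 'rV[int]_n) : 'X_{1..n} := [multinom negp (z ord0 i) | i < n].
Definition binom (K : fieldType) (n : nat) (z : 'rV[int]_n) : {mpoly K[n]} :=
  'X_[mpos z] - 'X_[mneg z].

Definition in_ideal (K : fieldType) (n : nat) (S : {mpoly K[n]} -> Prop)
    (p : {mpoly K[n]}) : Prop :=
  exists s : seq ({mpoly K[n]} * {mpoly K[n]}),
    (forall q, q \in s -> S q.2) /\ p = \sum_(q <- s) q.1 * q.2.
Arguments in_ideal K {n} S p.

Definition toric_gens (K : fieldType) (d n : nat) (C : 'M[int]_(d, n))
    (f : {mpoly K[n]}) : Prop :=
  exists u, inker C u /\ f = binom K u.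
Arguments toric_gens K {d n} C f.

Definition generates_toric (K : fieldType) (d n : nat) (C : 'M[int]_(d, n))
    (S : {mpoly K[n]} -> Prop) : Prop :=
  forall p, in_ideal K (toric_gens K C) p <-> in_ideal K S p.
Arguments generates_toric K {d n} C S.

(* dim ker(C) (rank of the lattice ker(C), i.e. dimension of its Q-span) *)
Definition kerdim (d n : nat) (C : 'M[int]_(d, n)) : nat :=
  (n - \rank (map_mx (intr : int -> rat) C))%N.

Definition complete_intersection (K : fieldType) (d n : nat) (C : 'M[int]_(d, n)) : Prop :=
  exists G : seq {mpoly K[n]},
    size G = kerdim C /\ generates_toric K C (fun f => f \in G).
Arguments complete_intersection K {d n} C.

Definition markov_basis (K : fieldType) (d n : nat) (C : 'M[int]_(d, n))
    (B : 'rV[int]_n -> Prop) : Prop :=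
  (forall u, B u -> inker C u) /\
  generates_toric K C (fun f => exists u, B u /\ f = binom K u).
Arguments markov_basis K {d n} C B.

Definition minimal_markov_basis (K : fieldType) (d n : nat) (C : 'M[int]_(d, n))
    (B : 'rV[int]_n -> Prop) : Prop :=
  markov_basis K C B /\
  forall B' : 'rV[int]_n -> Prop,
    (forall u, B' u -> B u) -> (exists u, B u /\ ~ B' u) -> ~ markov_basis K C B'.
Arguments minimal_markov_basis K {d n} C B.

Definition reduces (n : nat) (u z : 'rV[int]_n) : Prop :=
  exists p q : 'rV[int]_n,
    ((p, q) = (vpos z, vneg z) \/ (p, q) = (vneg z, vpos z)) /\
    exists e : int, (e = 1 \/ e = -1) /\
      (forall i, 0 <= (p + e *: u) 0 i) /\
      norm1 (p + e *: u - q) < norm1 z.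

Definition reduces_dist (n : nat) (B Z : 'rV[int]_n -> Prop) : Prop :=
  forall z, Z z -> z != 0 -> exists u, B u /\ reduces u z.

Definition circuit (d n : nat) (C : 'M[int]_(d, n)) (z : 'rV[int]_n) : Prop :=
  inker C z /\ z != 0 /\ #|[set i | z 0 i != 0]| = 2%N.

Definition vec3 (x1 x2 x3 : int) : 'rV[int]_3 := \row_(i < 3) [:: x1; x2; x3]`_i.
Definition vec4 (x1 x2 x3 x4 : int) : 'rV[int]_4 := \row_(i < 4) [:: x1; x2; x3; x4]`_i.

(* Let z be a circuit of A': it has one positive, one negative and one zero entry.
   Extended by 0 it is a circuit of A, hence reduced by some element of M.  If that
   element is g_k, then g_k' reduces z.  If it is h, the reduction forces
   h4 < h1 + h2 + h3 and h_i = 0 for some i in the support of z.  The circuit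
   a4 e_i - a_i e_4 of A can then only be reduced by g_i, which forces
   sum_(j <> i) v_ij < c_i.  On the other hand, since M' is a Markov basis, some
   move of M' divides x^(z^-), and likewise x^(z^+); as z^- and z^+ are supported
   on single coordinates this gives c_i <= |z_i|.  The two inequalities say that
   g_i' reduces z.  The cases i = 2, 3 are reduced to i = 1 by transposing
   coordinates. *)

From HB Require Import structures.
From mathcomp Require Import all_boot all_order all_algebra.
From mathcomp Require Import mpoly.
From mathcomp Require Import fingroup perm zify.
Set Implicit Arguments.
Unset Strict Implicit.
Unset Printing Implicit Defensive.

Import Order.TTheory GRing.Theory Num.Theory.
Local Open Scope ring_scope.

Definition part (b : bool) (x : int) : int := Num.max (if b then x else - x) 0.

Lemma part0 b : part b 0 = 0.
Proof. by case: b. Qed.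

Lemma pospE x : (posp x)%:Z = part true x.
Proof. by rewrite /part; case: x => k /=; lia. Qed.

Lemma negpE x : (negp x)%:Z = part false x.
Proof. by rewrite /negp pospE. Qed.

Lemma vposE n (z : 'rV[int]_n) : vpos z = \row_i part true (z 0 i).
Proof. by apply/rowP => i; rewrite !mxE pospE. Qed.

Lemma vnegE n (z : 'rV[int]_n) : vneg z = \row_i part false (z 0 i).
Proof. by apply/rowP => i; rewrite !mxE negpE. Qed.

Lemma reducesP n (u z : 'rV[int]_n) :
  reduces u z <->
  exists b (e : int), [/\ e = 1 \/ e = -1,
    forall i, 0 <= part b (z 0 i) + e * u 0 i &
    \sum_i `|part b (z 0 i) + e * u 0 i - part (~~ b) (z 0 i)| < \sum_i `|z 0 i|].
Proof.
rewrite /reduces /norm1 vposE vnegE; split.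
- case=> p [q [Hpq [e [He [Hge Hn]]]]]; move: Hge Hn.
  have [b [-> ->]] : exists b, p = \row_i part b (z 0 i) /\ q = \row_i part (~~ b) (z 0 i).
    by case: Hpq => -[-> ->]; [exists true | exists false].
  move=> Hge Hn; exists b, e; split=> // [i|]; first by move: (Hge i); rewrite !mxE.
  by move: Hn; under [X in X < _ -> _]eq_bigr do rewrite !mxE.
- case=> b [e [He Hge Hn]].
  exists (\row_i part b (z 0 i)), (\row_i part (~~ b) (z 0 i)); split.
    by case: b {Hge Hn}; [left | right].
  exists e; split=> //; split=> [i|]; first by rewrite !mxE.
  by under [X in X < _]eq_bigr do rewrite !mxE.
Qed.

Lemma reduces_col_perm n (s : 'S_n) (u z : 'rV[int]_n) :
  reduces (col_perm s u) (col_perm s z) <-> reduces u z.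
Proof.
have reindex F : \sum_i F i = \sum_i F (s i) :> int := reindex_inj (@perm_inj _ s).
rewrite !reducesP; split=> -[b [e [He Hge Hn]]]; exists b, e; split=> //.
- by move=> i; have := Hge (s^-1 i)%g; rewrite !mxE permKV.
- by rewrite reindex [X in _ < X]reindex; move: Hn; under eq_bigr do rewrite !mxE;
    under [X in _ < X -> _]eq_bigr do rewrite !mxE.
- by move=> i; rewrite !mxE.
- rewrite reindex [X in _ < X]reindex in Hn.
  by under eq_bigr do rewrite !mxE; under [X in _ < X]eq_bigr do rewrite !mxE.
Qed.

Lemma reduces_opposite_signs n (u z : 'rV[int]_n) j k :
  z 0 j = 0 -> z 0 k = 0 -> u 0 j < 0 < u 0 k -> ~ reduces u z.
Proof.
move=> zj0 zk0 /andP [uj_lt0 uk_gt0] /reducesP [b [e [He Hge _]]].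
by move: (Hge j) (Hge k); rewrite zj0 zk0 part0; case: He => ->; lia.
Qed.

Lemma mcoeffMX_nle (K : fieldType) n (p : {mpoly K[n]}) (a m : 'X_{1..n}) :
  ~~ (a <= m)%MM -> (p * 'X_[a])@_m = 0.
Proof.
move=> a_nle_m; rewrite mcoeffM big1 // => k /eqP Hm.
rewrite mcoeffX; case: eqP => [Ek|]; last by rewrite mulr0.
case/negP: a_nle_m; apply/mnm_lepP => i.
by rewrite Hm Ek mnmDE leq_addl.
Qed.

Lemma mpos_neq_mneg n (z : 'rV[int]_n) : z != 0 -> mpos z != mneg z.
Proof.
apply: contraNneq => E; apply/eqP/rowP => i.
have := congr1 (fun m : 'X_{1..n} => Posz (m i)) E; rewrite !mnmE mxE pospE negpE /part /=.
by change (z ord0 i) with (z 0 i); lia.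
Qed.

Lemma markov_move_divides_mneg (K : fieldType) d n (C : 'M[int]_(d, n)) B z :
  markov_basis K C B -> inker C z -> z != 0 ->
  ~ (forall u, B u -> ~~ (mpos u <= mneg z)%MM && ~~ (mneg u <= mneg z)%MM).
Proof.
(* Compare the coefficients of x^(z^-) in an expression of the binomial of z
   through binomials of moves of B. *)
case=> _ gen_B Cz z_neq0 B_stuck.
have : in_ideal K (toric_gens K C) (binom K z).
  exists [:: (1, binom K z)]; split; last by rewrite big_seq1 mul1r.
  by move=> q; rewrite inE => /eqP -> /=; exists z.
case/gen_B => s [Bs /(congr1 (mcoeff (mneg z)))].
rewrite raddf_sum big1_seq => [|q /andP [_ /Bs [u [Bu ->]]]]; last first.
  by have /andP [? ?] := B_stuck u Bu; rewrite /binom mulrBr raddfB /= !mcoeffMX_nle ?subrr.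
rewrite /binom mcoeffB !mcoeffX eqxx (negPf (mpos_neq_mneg z_neq0)) sub0r.
by move/eqP; rewrite oppr_eq0 oner_eq0.
Qed.

Lemma lepm_multinom3 (f g : 'I_3 -> nat) :
  ([multinom f i | i < 3] <= [multinom g i | i < 3])%MM =
  [&& leq (f 0) (g 0), leq (f 1) (g 1) & leq (f 2%:R) (g 2%:R)].
Proof.
apply/mnm_lepP/and3P => [le_fg | [? ? ?] i].
  by split; move: (le_fg 0) (le_fg 1) (le_fg 2%:R); rewrite !mnmE.
have [->|[->|->]] : i = 0 \/ i = 1 \/ i = 2%:R.
  by case: i => -[|[|[|]]] // ?; [left | right; left | right; right]; apply: val_inj.
all: by rewrite !mnmE.
Qed.

Lemma sum_ord3 (F : 'I_3 -> int) : \sum_i F i = F 0 + F 1 + F 2%:R.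
Proof. by rewrite !big_ord_recr big_ord0 /= add0r; congr (F _ + F _ + F _); apply: val_inj. Qed.

Lemma sum_ord4 (F : 'I_4 -> int) : \sum_i F i = F 0 + F 1 + F 2%:R + F 3%:R.
Proof.
by rewrite !big_ord_recr big_ord0 /= add0r; congr (F _ + F _ + F _ + F _); apply: val_inj.
Qed.

Lemma vec3_eta (z : 'rV[int]_3) : z = vec3 (z 0 0) (z 0 1) (z 0 2%:R).
Proof. by apply/rowP => -[[|[|[|]]] //= ?]; rewrite !mxE; congr (z 0 _); apply: val_inj. Qed.

Lemma reduces_vec3E u1 u2 u3 z1 z2 z3 :
  reduces (vec3 u1 u2 u3) (vec3 z1 z2 z3) <->
  exists b (e : int), [/\ e = 1 \/ e = -1,
    [/\ 0 <= part b z1 + e * u1, 0 <= part b z2 + e * u2 & 0 <= part b z3 + e * u3] &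
    `|part b z1 + e * u1 - part (~~ b) z1| + `|part b z2 + e * u2 - part (~~ b) z2|
      + `|part b z3 + e * u3 - part (~~ b) z3| < `|z1| + `|z2| + `|z3|].
Proof.
rewrite reducesP; split=> -[b [e [He Hge Hn]]]; exists b, e.
- split=> //; last by move: Hn; rewrite !sum_ord3 !mxE.
  by split; [move: (Hge 0) | move: (Hge 1) | move: (Hge 2%:R)]; rewrite !mxE.
- split=> //; last by rewrite !sum_ord3 !mxE.
  by case: Hge => ? ? ? [[|[|[|]]]] //= ?; rewrite !mxE.
Qed.

Lemma reduces_vec4E u1 u2 u3 u4 z1 z2 z3 z4 :
  reduces (vec4 u1 u2 u3 u4) (vec4 z1 z2 z3 z4) <->
  exists b (e : int), [/\ e = 1 \/ e = -1,
    [/\ 0 <= part b z1 + e * u1, 0 <= part b z2 + e * u2, 0 <= part b z3 + e * u3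
      & 0 <= part b z4 + e * u4] &
    `|part b z1 + e * u1 - part (~~ b) z1| + `|part b z2 + e * u2 - part (~~ b) z2|
      + `|part b z3 + e * u3 - part (~~ b) z3| + `|part b z4 + e * u4 - part (~~ b) z4|
      < `|z1| + `|z2| + `|z3| + `|z4|].
Proof.
rewrite reducesP; split=> -[b [e [He Hge Hn]]]; exists b, e.
- split=> //; last by move: Hn; rewrite !sum_ord4 !mxE.
  by split; [move: (Hge 0) | move: (Hge 1) | move: (Hge 2%:R) | move: (Hge 3%:R)];
    rewrite !mxE.
- split=> //; last by rewrite !sum_ord4 !mxE.
  by case: Hge => ? ? ? ? [[|[|[|[|]]]]] //= ?; rewrite !mxE.
Qed.

Lemma inker_vec3E (a1 a2 a3 x1 x2 x3 : int) :
  inker (vec3 a1 a2 a3) (vec3 x1 x2 x3) <-> a1 * x1 + a2 * x2 + a3 * x3 = 0.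
Proof.
rewrite /inker; have -> : vec3 a1 a2 a3 *m (vec3 x1 x2 x3)^T = (a1 * x1 + a2 * x2 + a3 * x3)%:M.
  by apply/matrixP => i j; rewrite !ord1 !mxE sum_ord3 !mxE.
split=> [/matrixP/(_ 0 0)|->]; first by rewrite !mxE.
by apply/matrixP => i j; rewrite !ord1 !mxE.
Qed.

Lemma inker_vec4E (a1 a2 a3 a4 x1 x2 x3 x4 : int) :
  inker (vec4 a1 a2 a3 a4) (vec4 x1 x2 x3 x4) <->
  a1 * x1 + a2 * x2 + a3 * x3 + a4 * x4 = 0.
Proof.
rewrite /inker; have -> : vec4 a1 a2 a3 a4 *m (vec4 x1 x2 x3 x4)^T
          = (a1 * x1 + a2 * x2 + a3 * x3 + a4 * x4)%:M.
  by apply/matrixP => i j; rewrite !ord1 !mxE sum_ord4 !mxE.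
split=> [/matrixP/(_ 0 0)|->]; first by rewrite !mxE.
by apply/matrixP => i j; rewrite !ord1 !mxE.
Qed.

Lemma circuit_vec3E (a1 a2 a3 x1 x2 x3 : int) :
  circuit (vec3 a1 a2 a3) (vec3 x1 x2 x3) <->
  a1 * x1 + a2 * x2 + a3 * x3 = 0 /\ ((x1 != 0) + (x2 != 0) + (x3 != 0) = 2)%N.
Proof.
rewrite /circuit inker_vec3E.
have -> : #|[set i | vec3 x1 x2 x3 0 i != 0]| = ((x1 != 0) + (x2 != 0) + (x3 != 0))%N.
  by rewrite cardsE -sum1_card big_mkcond /= !big_ord_recr big_ord0 /= !unfold_in !mxE.
have -> : (vec3 x1 x2 x3 != 0) = [|| x1 != 0, x2 != 0 | x3 != 0].
  rewrite -!negb_and; congr (~~ _).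
  apply/eqP/and3P => [/rowP z0 | [/eqP-> /eqP-> /eqP->]].
    by split; apply/eqP; [move: (z0 0) | move: (z0 1) | move: (z0 2%:R)]; rewrite !mxE.
  by apply/rowP => -[[|[|[|]]]] //= ?; rewrite !mxE.
split=> [[? [_ ?]] | [? supp2]] //; do !split => //.
by move: supp2; case: (x1 != 0); case: (x2 != 0); case: (x3 != 0).
Qed.

Lemma circuit_vec4E (a1 a2 a3 a4 x1 x2 x3 x4 : int) :
  circuit (vec4 a1 a2 a3 a4) (vec4 x1 x2 x3 x4) <->
  a1 * x1 + a2 * x2 + a3 * x3 + a4 * x4 = 0 /\
  ((x1 != 0) + (x2 != 0) + (x3 != 0) + (x4 != 0) = 2)%N.
Proof.
rewrite /circuit inker_vec4E.
have -> : #|[set i | vec4 x1 x2 x3 x4 0 i != 0]|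
          = ((x1 != 0) + (x2 != 0) + (x3 != 0) + (x4 != 0))%N.
  by rewrite cardsE -sum1_card big_mkcond /= !big_ord_recr big_ord0 /= !unfold_in !mxE.
have -> : (vec4 x1 x2 x3 x4 != 0) = [|| x1 != 0, x2 != 0, x3 != 0 | x4 != 0].
  rewrite -!negb_and; congr (~~ _).
  apply/eqP/and4P => [/rowP z0 | [/eqP-> /eqP-> /eqP-> /eqP->]].
    by split; apply/eqP; [move: (z0 0) | move: (z0 1) | move: (z0 2%:R) | move: (z0 3%:R)];
      rewrite !mxE.
  by apply/rowP => -[[|[|[|[|]]]]] //= ?; rewrite !mxE.
split=> [[? [_ ?]] | [? supp2]] //; do !split => //.
by move: supp2; case: (x1 != 0); case: (x2 != 0); case: (x3 != 0); case: (x4 != 0).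
Qed.

Lemma col_perm_vec3_01 (x1 x2 x3 : int) :
  col_perm (tperm 0 1) (vec3 x1 x2 x3) = vec3 x2 x1 x3.
Proof. by apply/rowP => -[[|[|[|]]] //= ?]; rewrite !mxE permE. Qed.

Lemma col_perm_vec3_02 (x1 x2 x3 : int) :
  col_perm (tperm 0 2%:R) (vec3 x1 x2 x3) = vec3 x3 x2 x1.
Proof. by apply/rowP => -[[|[|[|]]] //= ?]; rewrite !mxE permE. Qed.

Lemma col_perm_vec4_01 (x1 x2 x3 x4 : int) :
  col_perm (tperm 0 1) (vec4 x1 x2 x3 x4) = vec4 x2 x1 x3 x4.
Proof. by apply/rowP => -[[|[|[|[|]]]] //= ?]; rewrite !mxE permE. Qed.

Lemma col_perm_vec4_02 (x1 x2 x3 x4 : int) :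
  col_perm (tperm 0 2%:R) (vec4 x1 x2 x3 x4) = vec4 x3 x2 x1 x4.
Proof. by apply/rowP => -[[|[|[|[|]]]] //= ?]; rewrite !mxE permE. Qed.

Definition circuit_signs (x1 x2 x3 : int) : Prop :=
  [/\ 0 < x1 \/ 0 < x2 \/ 0 < x3, x1 < 0 \/ x2 < 0 \/ x3 < 0 & x1 = 0 \/ x2 = 0 \/ x3 = 0].

Lemma circuit_vec3_signs (a1 a2 a3 x1 x2 x3 : int) :
  0 < a1 -> 0 < a2 -> 0 < a3 ->
  circuit (vec3 a1 a2 a3) (vec3 x1 x2 x3) -> circuit_signs x1 x2 x3.
Proof. by move=> ? ? ? /circuit_vec3E [? ?]; split; nia. Qed.

Lemma circuit_vec3_ext0 (a1 a2 a3 a4 x1 x2 x3 : int) :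
  circuit (vec3 a1 a2 a3) (vec3 x1 x2 x3) -> circuit (vec4 a1 a2 a3 a4) (vec4 x1 x2 x3 0).
Proof. by move/circuit_vec3E => -[? ?]; apply/circuit_vec4E; split; lia. Qed.

Lemma axis_circuits (a1 a2 a3 a4 : int) :
  0 < a1 -> 0 < a2 -> 0 < a3 -> 0 < a4 ->
  let A := vec4 a1 a2 a3 a4 in
  [/\ circuit A (vec4 a4 0 0 (- a1)), circuit A (vec4 0 a4 0 (- a2))
    & circuit A (vec4 0 0 a4 (- a3))].
Proof. by move=> ? ? ? ? A; split; apply/circuit_vec4E; split; lia. Qed.

Lemma reduces_vec4_vec3 (u1 u2 u3 z1 z2 z3 : int) :
  reduces (vec4 u1 u2 u3 0) (vec4 z1 z2 z3 0) -> reduces (vec3 u1 u2 u3) (vec3 z1 z2 z3).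
Proof.
rewrite reduces_vec4E reduces_vec3E => -[b [e [He [? ? ? _] Hn]]].
by exists b, e; split=> //; move: Hn; rewrite !part0; lia.
Qed.

Lemma reduces_ext0_neg_last (h1 h2 h3 h4 x1 x2 x3 : int) :
  0 <= h1 -> 0 <= h2 -> 0 <= h3 -> 0 < h4 -> circuit_signs x1 x2 x3 ->
  reduces (vec4 h1 h2 h3 (- h4)) (vec4 x1 x2 x3 0) ->
  h4 < h1 + h2 + h3 /\ (x1 != 0 /\ h1 = 0 \/ x2 != 0 /\ h2 = 0 \/ x3 != 0 /\ h3 = 0).
Proof.
move=> ? ? ? ? [? ? _] /reduces_vec4E [[] [e [[->|->] H]]];
  by move: H; rewrite !part0 /part /= => -[[? ? ? ?] ?]; lia.
Qed.

Lemma dominant_move_reduces (c1 v12 v13 x1 x2 x3 : int) :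
  0 <= v12 -> 0 <= v13 -> v12 + v13 < c1 -> c1 <= `|x1| -> circuit_signs x1 x2 x3 ->
  reduces (vec3 (- c1) v12 v13) (vec3 x1 x2 x3).
Proof.
move=> ? ? ? ? [? ? ?]; apply/reduces_vec3E; exists (0 < x1), 1; rewrite /part.
by case: (ltrP 0 x1) => /= ?; (split; [left | split | ]); lia.
Qed.

Definition moves3 (c1 c2 c3 v12 v13 v21 v23 v31 v32 : int) (u : 'rV[int]_3) : Prop :=
  u = vec3 (- c1) v12 v13 \/ u = vec3 v21 (- c2) v23 \/ u = vec3 v31 v32 (- c3).

Definition moves4 (c1 c2 c3 v12 v13 v21 v23 v31 v32 h1 h2 h3 h4 : int)
    (u : 'rV[int]_4) : Prop :=
  u = vec4 (- c1) v12 v13 0 \/ u = vec4 v21 (- c2) v23 0 \/ u = vec4 v31 v32 (- c3) 0 \/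
  u = vec4 h1 h2 h3 (- h4).

Lemma moves4_col_perm01 c1 c2 c3 v12 v13 v21 v23 v31 v32 h1 h2 h3 h4 u :
  moves4 c1 c2 c3 v12 v13 v21 v23 v31 v32 h1 h2 h3 h4 u ->
  moves4 c2 c1 c3 v21 v23 v12 v13 v32 v31 h2 h1 h3 h4 (col_perm (tperm 0 1) u).
Proof.
by case=> [|[|[|]]] ->; rewrite col_perm_vec4_01 /moves4;
  [right; left | left | right; right; left | right; right; right].
Qed.

Lemma moves4_col_perm02 c1 c2 c3 v12 v13 v21 v23 v31 v32 h1 h2 h3 h4 u :
  moves4 c1 c2 c3 v12 v13 v21 v23 v31 v32 h1 h2 h3 h4 u ->
  moves4 c3 c2 c1 v32 v31 v23 v21 v13 v12 h3 h2 h1 h4 (col_perm (tperm 0 2%:R) u).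
Proof.
by case=> [|[|[|]]] ->; rewrite col_perm_vec4_02 /moves4;
  [right; right; left | right; left | left | right; right; right].
Qed.

Lemma axis_circuit_reducer_bound (a1 a4 c1 c2 c3 v12 v13 v21 v23 v31 v32 h2 h3 h4 : int) :
  0 < a1 -> 0 < a4 -> 0 < c1 -> 0 < c2 -> 0 < c3 -> 0 < v12 -> 0 < v23 -> 0 < v32 ->
  0 <= h2 -> 0 <= h3 -> 0 < h4 -> h4 < h2 + h3 ->
  (exists2 u, moves4 c1 c2 c3 v12 v13 v21 v23 v31 v32 0 h2 h3 h4 u
            & reduces u (vec4 a4 0 0 (- a1))) ->
  v12 + v13 < c1.
Proof.
(* g2 and g3 have entries of opposite signs off the support of the circuit, and h
   is excluded by h4 < h2 + h3; so the reducer is g1. *)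
move=> ? ? ? ? ? ? ? ? ? ? ? ? [u [|[|[|]]] -> Ru].
- move/reduces_vec4E: Ru => -[[] [e [[->|->] H]]];
    by move: H; rewrite /part /= => -[[? ? ? ?] ?]; lia.
- by case: (reduces_opposite_signs (j := 1) (k := 2%:R) _ _ _ Ru); rewrite !mxE //=; lia.
- by case: (reduces_opposite_signs (j := 2%:R) (k := 1) _ _ _ Ru); rewrite !mxE //=; lia.
- move/reduces_vec4E: Ru => -[[] [e [[->|->] H]]];
    by move: H; rewrite /part /= => -[[? ? ? ?] ?]; lia.
Qed.

Section Restriction.

Variable K : fieldType.
Variables a1 a2 a3 a4 c1 c2 c3 v12 v13 v21 v23 v31 v32 h1 h2 h3 h4 : int.
Hypotheses (a1_gt0 : 0 < a1) (a2_gt0 : 0 < a2) (a3_gt0 : 0 < a3) (a4_gt0 : 0 < a4).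
Hypotheses (c1_gt0 : 0 < c1) (c2_gt0 : 0 < c2) (c3_gt0 : 0 < c3).
Hypotheses (v12_gt0 : 0 < v12) (v13_gt0 : 0 < v13) (v21_gt0 : 0 < v21).
Hypotheses (v23_gt0 : 0 < v23) (v31_gt0 : 0 < v31) (v32_gt0 : 0 < v32).
Hypotheses (h1_ge0 : 0 <= h1) (h2_ge0 : 0 <= h2) (h3_ge0 : 0 <= h3) (h4_gt0 : 0 < h4).

Local Notation A' := (vec3 a1 a2 a3).
Local Notation A := (vec4 a1 a2 a3 a4).
Local Notation M' := (moves3 c1 c2 c3 v12 v13 v21 v23 v31 v32).
Local Notation M := (moves4 c1 c2 c3 v12 v13 v21 v23 v31 v32 h1 h2 h3 h4).

Hypothesis M'_markov : markov_basis K A' M'.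
Hypothesis M_reduces : reduces_dist M (circuit A).

Lemma moves3_divides_mneg y1 y2 y3 :
  inker A' (vec3 y1 y2 y3) -> vec3 y1 y2 y3 != 0 ->
  c1 <= part false y1 \/ (v12 <= part false y2 /\ v13 <= part false y3) \/
  c2 <= part false y2 \/ (v21 <= part false y1 /\ v23 <= part false y3) \/
  c3 <= part false y3 \/ (v31 <= part false y1 /\ v32 <= part false y2).
Proof.
move=> Ky y_neq0; have stuck := markov_move_divides_mneg M'_markov Ky y_neq0.
set y := vec3 y1 y2 y3.
pose applies u := (mpos u <= mneg y)%MM || (mneg u <= mneg y)%MM.
have : [|| applies (vec3 (- c1) v12 v13), applies (vec3 v21 (- c2) v23)
         | applies (vec3 v31 v32 (- c3))].
  apply/negPn/negP; rewrite !negb_or => /and3P [n1 n2 n3].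
  by apply: stuck => u [|[|]] ->.
rewrite /applies /mpos /mneg !lepm_multinom3 !mxE /= -!lez_nat !pospE /part /=.
lia.
Qed.

Lemma circuit_entry_bound x1 x2 x3 : circuit A' (vec3 x1 x2 x3) ->
  [/\ x1 != 0 -> c1 <= `|x1|, x2 != 0 -> c2 <= `|x2| & x3 != 0 -> c3 <= `|x3|].
Proof.
(* Only g_i'^- = c_i e_i can divide a monomial supported on the single coordinate i. *)
move=> Cx; have [? ? ?] := circuit_vec3_signs a1_gt0 a2_gt0 a3_gt0 Cx.
have Cx' : circuit A' (vec3 (- x1) (- x2) (- x3)).
  by move/circuit_vec3E: Cx => -[? ?]; apply/circuit_vec3E; rewrite !oppr_eq0 !mulrN; lia.
have := moves3_divides_mneg Cx.1 Cx.2.1; have := moves3_divides_mneg Cx'.1 Cx'.2.1.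
rewrite /part /= !opprK => ? ?; split=> ?; lia.
Qed.

Lemma reduces_first_axis x1 x2 x3 :
  h1 = 0 -> h4 < h1 + h2 + h3 -> c1 <= `|x1| -> circuit_signs x1 x2 x3 ->
  reduces (vec3 (- c1) v12 v13) (vec3 x1 x2 x3).
Proof.
move=> h1_0 h4_lt c1_le signs; apply: dominant_move_reduces => //; try lia.
have [C1 _ _] := axis_circuits a1_gt0 a2_gt0 a3_gt0 a4_gt0.
have [u [Mu Ru]] := M_reduces C1 C1.2.1; rewrite h1_0 in Mu.
apply: (@axis_circuit_reducer_bound a1 a4 c1 c2 c3 v12 v13 v21 v23 v31 v32 h2 h3 h4)
  => //; first lia.
by exists u.
Qed.

Lemma reduces_second_axis x1 x2 x3 :
  h2 = 0 -> h4 < h1 + h2 + h3 -> c2 <= `|x2| -> circuit_signs x1 x2 x3 ->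
  reduces (vec3 v21 (- c2) v23) (vec3 x1 x2 x3).
Proof.
move=> h2_0 h4_lt c2_le [? ? ?].
apply/(reduces_col_perm (tperm 0 1)); rewrite !col_perm_vec3_01.
apply: dominant_move_reduces => //; try lia; last by split; lia.
have [_ C2 _] := axis_circuits a1_gt0 a2_gt0 a3_gt0 a4_gt0.
have [u [/moves4_col_perm01 Mu Ru]] := M_reduces C2 C2.2.1; rewrite h2_0 in Mu.
apply: (@axis_circuit_reducer_bound a2 a4 c2 c1 c3 v21 v23 v12 v13 v32 v31 h1 h3 h4)
  => //; first lia.
by exists (col_perm (tperm 0 1) u); rewrite // -col_perm_vec4_01; apply/reduces_col_perm.
Qed.

Lemma reduces_third_axis x1 x2 x3 :
  h3 = 0 -> h4 < h1 + h2 + h3 -> c3 <= `|x3| -> circuit_signs x1 x2 x3 ->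
  reduces (vec3 v31 v32 (- c3)) (vec3 x1 x2 x3).
Proof.
move=> h3_0 h4_lt c3_le [? ? ?].
apply/(reduces_col_perm (tperm 0 2%:R)); rewrite !col_perm_vec3_02.
apply: dominant_move_reduces => //; try lia; last by split; lia.
have [_ _ C3] := axis_circuits a1_gt0 a2_gt0 a3_gt0 a4_gt0.
have [u [/moves4_col_perm02 Mu Ru]] := M_reduces C3 C3.2.1; rewrite h3_0 in Mu.
apply: (@axis_circuit_reducer_bound a3 a4 c3 c2 c1 v32 v31 v23 v21 v13 v12 h2 h1 h4)
  => //; first lia.
by exists (col_perm (tperm 0 2%:R) u); rewrite // -col_perm_vec4_02; apply/reduces_col_perm.
Qed.

Theorem restriction_reduces_dist : reduces_dist M' (circuit A').
Proof.
move=> z Cz _; rewrite [z]vec3_eta in Cz *.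
move: (z 0 0) (z 0 1) (z 0 2%:R) Cz => x1 x2 x3 Cz.
have signs := circuit_vec3_signs a1_gt0 a2_gt0 a3_gt0 Cz.
have [c1_le c2_le c3_le] := circuit_entry_bound Cz.
have Cz4 := circuit_vec3_ext0 a4 Cz.
have [u [[|[|[|]]] -> Ru]] := M_reduces Cz4 Cz4.2.1.
- by exists (vec3 (- c1) v12 v13); split; [left | apply: reduces_vec4_vec3].
- by exists (vec3 v21 (- c2) v23); split; [right; left | apply: reduces_vec4_vec3].
- by exists (vec3 v31 v32 (- c3)); split; [right; right | apply: reduces_vec4_vec3].
have [h4_lt [[x1_neq0 h1_0] | [[x2_neq0 h2_0] | [x3_neq0 h3_0]]]] :=
  reduces_ext0_neg_last h1_ge0 h2_ge0 h3_ge0 h4_gt0 signs Ru.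
- by exists (vec3 (- c1) v12 v13); split; [left | apply: reduces_first_axis; auto].
- by exists (vec3 v21 (- c2) v23); split; [right; left | apply: reduces_second_axis; auto].
- by exists (vec3 v31 v32 (- c3)); split; [right; right | apply: reduces_third_axis; auto].
Qed.

End Restriction.

Theorem proposition6p7 (K : fieldType) (a1 a2 a3 a4 : nat)
  (c1 c2 c3 v12 v13 v21 v23 v31 v32 h1 h2 h3 h4 : nat) :
  (0 < a1)%N -> (0 < a2)%N -> (0 < a3)%N -> (0 < a4)%N ->
  let A := vec4 a1%:Z a2%:Z a3%:Z a4%:Z in
  let A' := vec3 a1%:Z a2%:Z a3%:Z in
  ~ complete_intersection K A' ->
  (exists x : int,
      (exists n1 n2 n3 : nat, x = (n1 * a1 + n2 * a2 + n3 * a3)%N%:Z) /\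
      (exists m : nat, x = (a4 * m)%N%:Z) /\
      (forall z : int,
         (exists k : int, z = x * k) <->
         ((exists z1 z2 z3 : int, z = z1 * a1%:Z + z2 * a2%:Z + z3 * a3%:Z) /\
          (exists k : int, z = a4%:Z * k)))) ->
  (0 < c1)%N -> (0 < c2)%N -> (0 < c3)%N ->
  (0 < v12)%N -> (0 < v13)%N -> (0 < v21)%N -> (0 < v23)%N ->
  (0 < v31)%N -> (0 < v32)%N ->
  let g1' := vec3 (- c1%:Z) v12%:Z v13%:Z in
  let g2' := vec3 v21%:Z (- c2%:Z) v23%:Z in
  let g3' := vec3 v31%:Z v32%:Z (- c3%:Z) in
  let M' := fun u => u = g1' \/ u = g2' \/ u = g3' in
  minimal_markov_basis K A' M' ->
  (0 < h4)%N ->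
  let g1 := vec4 (- c1%:Z) v12%:Z v13%:Z 0 in
  let g2 := vec4 v21%:Z (- c2%:Z) v23%:Z 0 in
  let g3 := vec4 v31%:Z v32%:Z (- c3%:Z) 0 in
  let h := vec4 h1%:Z h2%:Z h3%:Z (- h4%:Z) in
  let M := fun u => u = g1 \/ u = g2 \/ u = g3 \/ u = h in
  minimal_markov_basis K A M ->
  reduces_dist M (circuit A) ->
  reduces_dist M' (circuit A').
Proof.
move=> ? ? ? ? A A' _ _ ? ? ? ? ? ? ? ? ? g1' g2' g3' M' [M'_markov _] ? g1 g2 g3 h M _
  M_reduces.
by apply: restriction_reduces_dist M'_markov M_reduces.
Qed.
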